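(* Let $f$ be a real function on $[0,1]$ satisfying the H\''older condition $|f(x')-f(x'')|\le H|x'-x''|^{1/N}$ for all $x',x''\in[0,1]$, with $H>0$ and integer $N\ge 1$. Apply the algorithm PLT (described in the context) to $f$, with the stopping rule disregarded, and let $\{x^q\}$ be the resulting infinite sequence of trial points. Assume that the numbers of parallel trials satisfy $p(l)\le Q<\infty$ for all $l>1$. Let $\bar x\in[0,1]$ be a limit point of $\{x^q\}$. Then: (i) if $\bar x\in(0,1)$, there exist two subsequences of $\{x^q\}$, one converging to $\bar x$ from the left and the other converging to $\bar x$ from the right; (ii) if $f$ has a finite number of local extrema, then $\bar x$ is a local minimizer of $f$; (iii) if $\hat x$ is another limit point of $\{x^q\}$, then $f(\bar x)=f(\hat x)$; (iv) for all $q\ge 1$, $z^q=f(x^q)\ge f(\bar x)$.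
   Context: Algorithm PLT (parallel information algorithm with local tuning) for minimizing $f$ on $[0,1]$; parameters: integer $N\ge1$, reliability parameter $r>1$, small number $\xi>0$. A ''trial'' is an evaluation of $f$ at a point. Step 0: perform $q(1)>1$ initial trials at $x^1=0$, $x^2=1$ and some interior points $x^3,\dots,x^{q(1)}\in(0,1)$; set $l=1$. At iteration $l$, let $q=q(l)$ be the number of trials made so far. Step 1: order all trial points as $0=x_1<x_2<\dots<x_q=1$ and set $z_i=f(x_i)$. Step 2: for $2\le j\le q$ compute $\mu_j=\max\{\lambda_j,\gamma_j,\xi\}$, where $\lambda_j=\max\{|z_i-z_{i-1}|/(x_i-x_{i-1})^{1/N}: i\in I_j\}$ with $I_2=\{2,3\}$, $I_j=\{j-1,j,j+1\}$ for $3\le j\le q-1$, $I_q=\{q-1,q\}$; and $\gamma_j=\mu\,(x_j-x_{j-1})^{1/N}/(X^{\max})^{1/N}$ with $\mu=\max\{|z_i-z_{i-1}|/(x_i-x_{i-1})^{1/N}:2\le i\le q\}$ and $X^{\max}=\max\{x_i-x_{i-1}:2\le i\le q\}$. Step 3: for $2\le j\le q$ compute the characteristic $R(j)=r\mu_j(x_j-x_{j-1})^{1/N}+\frac{(z_j-z_{j-1})^2}{r\mu_j(x_j-x_{j-1})^{1/N}}-(z_j+z_{j-1})$. Step 4: choose $p=p(l+1)\le q(l)-1$ and distinct indices $t_1,\dots,t_p$ being the indices of the $p$ largest characteristics ($t_1=\arg\max\{R(i):1<i\le q\}$, $t_k=\arg\max\{R(i):1<i\le q,\ i\ne t_s, 1\le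 s\le k-1\}$); the new trial points are $x^{q+k}=\tfrac12(x_{t_k-1}+x_{t_k})-\frac{1}{2r}\left(\frac{|z_{t_k}-z_{t_k-1}|}{\mu_{t_k}}\right)^N\operatorname{sign}(z_{t_k}-z_{t_k-1})$, $1\le k\le p$. Step 5: evaluate $f$ at these $p$ points in parallel, set $q(l+1)=q(l)+p(l+1)$, $l\leftarrow l+1$, and return to Step 1. (In the paper $f(x)=\phi(y(x))$ where $y$ is a Peano-type space-filling curve mapping $[0,1]$ onto a hyperinterval $D\subset\mathbb R^N$ and $\phi$ is Lipschitz on $D$, which yields the H\''older condition above.) *)

From Stdlib Require Import Reals Lra Lia List.
Open Scope R_scope.

Definition rootN (N : nat) (x : R) : R :=
  if Rlt_dec 0 x then Rpower x (/ INR N) else 0.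

Definition sgn (y : R) : R :=
  if Rlt_dec 0 y then 1 else if Rlt_dec y 0 then -1 else 0.

Fixpoint maxfrom (g : nat -> R) (a k : nat) : R :=
  match k with
  | O => g a
  | S k' => Rmax (g (a + S k')%nat) (maxfrom g a k')
  end.

(* max_range g a b = max { g i : a <= i <= b }  (for a <= b) *)
Definition max_range (g : nat -> R) (a b : nat) : R := maxfrom g a (b - a).

(* Quantities of Steps 2-4 of PLT, for the current number q of trials and
   the sorted trial points s 1 < s 2 < ... < s q  (s i = x_i, z_i = f (s i)). *)
Definition dx (s : nat -> R) (i : nat) : R := s i - s (i - 1)%nat.

Definition rt (N : nat) (s : nat -> R) (i : nat) : R := rootN N (dx s i).

Definition slope (f : R -> R) (N : nat) (s : nat -> R) (i : nat) : R :=
  Rabs (f (s i) - f (s (i - 1)%nat)) / rt N s i.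

Definition mu_all (f : R -> R) (N q : nat) (s : nat -> R) : R :=
  max_range (slope f N s) 2 q.

Definition Xmax (q : nat) (s : nat -> R) : R := max_range (dx s) 2 q.

(* lambda_j = max over I_j = {j-1, j, j+1} intersected with {2,...,q} *)
Definition lam (f : R -> R) (N q : nat) (s : nat -> R) (j : nat) : R :=
  max_range (slope f N s) (Nat.max 2 (j - 1)) (Nat.min q (j + 1)).

Definition gam (f : R -> R) (N q : nat) (s : nat -> R) (j : nat) : R :=
  mu_all f N q s * rt N s j / rootN N (Xmax q s).

Definition muj (f : R -> R) (N : nat) (xi : R) (q : nat) (s : nat -> R)
  (j : nat) : R :=
  Rmax (lam f N q s j) (Rmax (gam f N q s j) xi).

Definition charR (f : R -> R) (N : nat) (r xi : R) (q : nat) (s : nat -> R)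
  (j : nat) : R :=
  let m := r * muj f N xi q s j * rt N s j in
  m + (f (s j) - f (s (j - 1)%nat)) ^ 2 / m - (f (s j) + f (s (j - 1)%nat)).

Definition newpt (f : R -> R) (N : nat) (r xi : R) (q : nat) (s : nat -> R)
  (t : nat) : R :=
  (s (t - 1)%nat + s t) / 2
  - / (2 * r) * (Rabs (f (s t) - f (s (t - 1)%nat)) / muj f N xi q s t) ^ N
      * sgn (f (s t) - f (s (t - 1)%nat)).

Definition sorted_arrangement (X : nat -> R) (q : nat) (s : nat -> R) : Prop :=
  (forall i, (1 <= i < q)%nat -> s i < s (i + 1)%nat) /\
  (forall i, (1 <= i <= q)%nat -> exists k, (1 <= k <= q)%nat /\ s i = X k) /\
  (forall k, (1 <= k <= q)%nat -> exists i, (1 <= i <= q)%nat /\ s i = X k).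

(* One iteration of PLT: from q = q(l) trials to q' = q(l+1) trials,
   with p = p(l+1) new trials X (q+1), ..., X (q+p). *)
Definition PLT_step (f : R -> R) (N : nat) (r xi : R) (X : nat -> R)
  (q q' : nat) : Prop :=
  exists s, sorted_arrangement X q s /\
  exists (p : nat) (t : nat -> nat),
    (1 <= p <= q - 1)%nat /\ q' = (q + p)%nat /\
    (forall k, (1 <= k <= p)%nat -> (2 <= t k <= q)%nat) /\
    (forall k k', (1 <= k <= p)%nat -> (1 <= k' <= p)%nat -> t k = t k' -> k = k') /\
    (* t_k = argmax of R(i) over 2 <= i <= q, i different from t_1..t_{k-1} *)
    (forall k, (1 <= k <= p)%nat -> forall i, (2 <= i <= q)%nat ->
       (forall k', (1 <= k' < k)%nat -> i <> t k') ->
       charR f N r xi q s i <= charR f N r xi q s (t k)) /\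
    (forall k, (1 <= k <= p)%nat -> X (q + k)%nat = newpt f N r xi q s (t k)).

(* X q = x^q (q >= 1) is a trial sequence produced by PLT (no stopping rule),
   qs l = q(l) for l >= 1. *)
Definition PLT_run (f : R -> R) (N : nat) (r xi : R) (X : nat -> R)
  (qs : nat -> nat) : Prop :=
  (1 < qs 1%nat)%nat /\ X 1%nat = 0 /\ X 2%nat = 1 /\
  (forall i, (3 <= i <= qs 1%nat)%nat -> 0 < X i < 1) /\
  (forall i j, (1 <= i <= qs 1%nat)%nat -> (1 <= j <= qs 1%nat)%nat ->
     X i = X j -> i = j) /\
  (forall l, (1 <= l)%nat -> PLT_step f N r xi X (qs l) (qs (S l))).

Definition holder (f : R -> R) (H : R) (N : nat) : Prop :=
  forall x y, 0 <= x <= 1 -> 0 <= y <= 1 ->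
    Rabs (f x - f y) <= H * rootN N (Rabs (x - y)).

Definition limit_point (X : nat -> R) (xb : R) : Prop :=
  forall eps, 0 < eps -> forall n : nat,
    exists q : nat, (n <= q)%nat /\ (1 <= q)%nat /\ Rabs (X q - xb) < eps.

Definition local_min_on01 (f : R -> R) (x : R) : Prop :=
  0 <= x <= 1 /\ exists d, 0 < d /\
    forall y, 0 <= y <= 1 -> Rabs (y - x) < d -> f x <= f y.

Definition local_max_on01 (f : R -> R) (x : R) : Prop :=
  0 <= x <= 1 /\ exists d, 0 < d /\
    forall y, 0 <= y <= 1 -> Rabs (y - x) < d -> f y <= f x.

Definition local_extremum_on01 (f : R -> R) (x : R) : Prop :=
  local_min_on01 f x \/ local_max_on01 f x.

Definition finitely_many_local_extrema (f : R -> R) : Prop :=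
  exists L : list R, forall x, local_extremum_on01 f x -> In x L.

From Stdlib Require Import Reals.
From Stdlib Require Import Lra Lia List Classical IndefiniteDescription.
Open Scope R_scope.

(** Write [kappa r = (1 - 1/r)/2].  Two estimates on a single iteration drive
    everything: a new trial point splits its interval leaving at least a
    fraction [kappa r] on each side ([newpt_bounds]), and the characteristic
    R(j) of an interval is at least [-2 z + 3/4 r xi (x_j - x_{j-1})^(1/N)]
    for both endpoint values z, while it is close to [-2 f(x)] for a short
    interval near x (Hoelder continuity).

    From these: (a) near a limit point [xb] short intervals keep being
    selected, so selected characteristics drop below any [T0 > -2 f(xb)]
    infinitely often ([small_characteristic_selected]); (b) then an interval
    whose characteristic stays [>= T0] is split infinitely often, so it
    shrinks geometrically; hence no trial-free gap can end at a limit point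
    (giving (i)), and no trial value [f(a) < f(xb)] is possible, because all
    intervals next to [a] would have to be split at once, infinitely often,
    producing more than [Q] simultaneous trials (giving (iv)).  Claims (ii)
    and (iii) follow from (i), (iv) and the continuity of [f]. *)

Lemma INR_pos_of_ge1 N : (1 <= N)%nat -> 0 < INR N.
Proof. intro; apply lt_0_INR; lia. Qed.

Lemma rootN_pos N x : 0 < x -> 0 < rootN N x.
Proof. intro hx; unfold rootN; destruct (Rlt_dec 0 x); [apply exp_pos | lra]. Qed.

Lemma rootN_mono N x y : (1 <= N)%nat -> 0 <= x <= y -> rootN N x <= rootN N y.
Proof.
  intros hN [hx hxy]; unfold rootN.
  destruct (Rlt_dec 0 x); destruct (Rlt_dec 0 y); try lra.
  - apply Rle_Rpower_l; [left; apply Rinv_0_lt_compat, INR_pos_of_ge1 | lra]; auto.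
  - left; apply exp_pos.
Qed.

Lemma rootN_pow N x : (1 <= N)%nat -> 0 < x -> rootN N x ^ N = x.
Proof.
  intros hN hx; unfold rootN; destruct (Rlt_dec 0 x); [|lra].
  rewrite <- Rpower_pow by apply exp_pos.
  rewrite Rpower_mult, Rinv_l, Rpower_1; auto.
  apply Rgt_not_eq, INR_pos_of_ge1; auto.
Qed.

Lemma rootN_of_pow N z : (1 <= N)%nat -> 0 < z -> rootN N (z ^ N) = z.
Proof.
  intros hN hz; unfold rootN; destruct (Rlt_dec 0 (z ^ N)) as [_|n].
  - rewrite <- Rpower_pow by auto. rewrite Rpower_mult, Rinv_r, Rpower_1; auto.
    apply Rgt_not_eq, INR_pos_of_ge1; auto.
  - exfalso; apply n, pow_lt; auto.
Qed.

Lemma rootN_le_of N x z : (1 <= N)%nat -> 0 < z -> x <= z ^ N -> rootN N x <= z.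
Proof.
  intros hN hz hx. destruct (Rle_dec x 0).
  - unfold rootN; destruct (Rlt_dec 0 x); lra.
  - rewrite <- (rootN_of_pow N z) by auto. apply rootN_mono; auto; lra.
Qed.

Lemma Rabs_le_bounds x y : Rabs x <= y -> - y <= x <= y.
Proof. intro h; unfold Rabs in h; destruct (Rcase_abs x); split; lra. Qed.

Lemma holder_close f H N x y z : (1 <= N)%nat -> 0 < H -> holder f H N ->
  0 <= x <= 1 -> 0 <= y <= 1 -> 0 < z -> Rabs (x - y) <= z ^ N ->
  Rabs (f x - f y) <= H * z.
Proof.
  intros hN hH hhol hx hy hz h. eapply Rle_trans; [apply hhol; auto|].
  apply Rmult_le_compat_l; [lra|]. apply rootN_le_of; auto.
Qed.

Lemma maxfrom_ge g a k i : (a <= i <= a + k)%nat -> g i <= maxfrom g a k.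
Proof.
  revert i; induction k as [|k IH]; intros i hi; simpl.
  - replace i with a by lia; lra.
  - destruct (Nat.eq_dec i (a + S k)) as [->|ne]; [apply Rmax_l|].
    eapply Rle_trans; [apply IH; lia | apply Rmax_r].
Qed.

Lemma maxfrom_le g a k B :
  (forall i, (a <= i <= a + k)%nat -> g i <= B) -> maxfrom g a k <= B.
Proof.
  induction k as [|k IH]; intros h; simpl; [apply h; lia|].
  apply Rmax_lub; [apply h; lia | apply IH; intros; apply h; lia].
Qed.

Lemma max_range_ge g a b i : (a <= i <= b)%nat -> g i <= max_range g a b.
Proof. intros; unfold max_range; apply maxfrom_ge; lia. Qed.

Lemma max_range_le g a b B : (a <= b)%nat ->
  (forall i, (a <= i <= b)%nat -> g i <= B) -> max_range g a b <= B.
Proof. intros hab h; unfold max_range; apply maxfrom_le; intros; apply h; lia. Qed.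

Lemma sgn_abs_le1 y : Rabs (sgn y) <= 1.
Proof.
  unfold sgn. destruct (Rlt_dec 0 y); [rewrite Rabs_R1; lra|].
  destruct (Rlt_dec y 0); [rewrite Rabs_left by lra | rewrite Rabs_R0]; lra.
Qed.

(** The guaranteed relative distance of a new trial from the ends of its interval. *)
Definition kappa (r : R) : R := (1 - / r) / 2.

Lemma kappa_bounds r : 1 < r -> 0 < kappa r < 1/2.
Proof.
  intro h; unfold kappa. assert (0 < / r < 1).
  { split; [apply Rinv_0_lt_compat; lra|]. rewrite <- Rinv_1; apply Rinv_lt_contravar; lra. }
  lra.
Qed.

Lemma characteristic_lower_alg m za zb : 0 < m ->
  -2 * zb + 3 * m / 4 <= m + (zb - za) ^ 2 / m - (zb + za) /\
  -2 * za + 3 * m / 4 <= m + (zb - za) ^ 2 / m - (zb + za).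
Proof.
  intro hm.
  assert (sq : forall d, 0 <= d ^ 2 / m) by (intro; apply Rle_mult_inv_pos; [apply pow2_ge_0 | lra]).
  assert (E1 : m + (zb - za) ^ 2 / m - (zb + za) - (-2 * zb + 3 * m / 4)
               = (m / 2 + (zb - za)) ^ 2 / m) by (field; lra).
  assert (E2 : m + (zb - za) ^ 2 / m - (zb + za) - (-2 * za + 3 * m / 4)
               = (m / 2 - (zb - za)) ^ 2 / m) by (field; lra).
  pose proof (sq (m / 2 + (zb - za))); pose proof (sq (m / 2 - (zb - za))); lra.
Qed.

Definition increasing_grid (q : nat) (s : nat -> R) : Prop :=
  (2 <= q)%nat /\ (forall i, (1 <= i < q)%nat -> s i < s (i + 1)%nat) /\
  (forall i, (1 <= i <= q)%nat -> 0 <= s i <= 1).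

Section PLT.
Variables (f : R -> R) (N : nat) (r xi H : R).
Hypotheses (HN : (1 <= N)%nat) (Hr : 1 < r) (Hxi : 0 < xi) (HH : 0 < H)
  (Hhol : holder f H N).

Section Grid.
Variables (q : nat) (s : nat -> R).
Hypothesis (Hg : increasing_grid q s).

Lemma grid_lt i j : (1 <= i)%nat -> (i < j)%nat -> (j <= q)%nat -> s i < s j.
Proof.
  intros hi hij hj. destruct Hg as [_ [Hinc _]].
  induction j as [|j IH]; [lia|].
  replace (S j) with (j + 1)%nat by lia.
  destruct (Nat.eq_dec i j) as [->|ne]; [apply Hinc; lia|].
  eapply Rlt_trans; [apply IH; lia | apply Hinc; lia].
Qed.

Lemma grid_le i j : (1 <= i)%nat -> (i <= j)%nat -> (j <= q)%nat -> s i <= s j.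
Proof. intros. destruct (Nat.eq_dec i j) as [->|]; [lra | left; apply grid_lt; lia]. Qed.

Lemma grid_lt_inv i j : (1 <= i <= q)%nat -> (1 <= j <= q)%nat -> s i < s j -> (i < j)%nat.
Proof.
  intros hi hj h. destruct (Nat.lt_ge_cases i j); auto.
  assert (s j <= s i) by (apply grid_le; lia). lra.
Qed.

Lemma grid_in01 i : (1 <= i <= q)%nat -> 0 <= s i <= 1.
Proof. apply Hg. Qed.

Lemma dx_pos j : (2 <= j <= q)%nat -> 0 < dx s j.
Proof. intro hj. unfold dx. assert (s (j - 1)%nat < s j) by (apply grid_lt; lia). lra. Qed.

Lemma rt_pos j : (2 <= j <= q)%nat -> 0 < rt N s j.
Proof. intro hj; apply rootN_pos, dx_pos; auto. Qed.

Lemma dz_bound j : (2 <= j <= q)%nat ->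
  Rabs (f (s j) - f (s (j - 1)%nat)) <= H * rt N s j.
Proof.
  intro hj. pose proof (dx_pos j hj) as hd. unfold rt, dx in *.
  rewrite <- (Rabs_pos_eq (s j - s (j - 1)%nat)) by lra.
  apply Hhol; apply grid_in01; lia.
Qed.

Lemma slope_bounds j : (2 <= j <= q)%nat -> 0 <= slope f N s j <= H.
Proof.
  intro hj. pose proof (rt_pos j hj). pose proof (dz_bound j hj). unfold slope. split.
  - apply Rle_mult_inv_pos; [apply Rabs_pos | auto].
  - apply Rmult_le_reg_r with (rt N s j); auto.
    unfold Rdiv; rewrite Rmult_assoc, Rinv_l; lra.
Qed.

Lemma mu_all_bounds : 0 <= mu_all f N q s <= H.
Proof.
  destruct Hg as [hq _]. unfold mu_all. split.
  - eapply Rle_trans; [apply (slope_bounds 2); lia | apply max_range_ge; lia].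
  - apply max_range_le; [lia|]. intros; apply slope_bounds; lia.
Qed.

Lemma gam_le j : (2 <= j <= q)%nat -> gam f N q s j <= H.
Proof.
  intro hj. unfold gam. pose proof (rt_pos j hj). pose proof (dx_pos j hj).
  assert (hX : dx s j <= Xmax q s) by (apply max_range_ge; lia).
  assert (hR : 0 < rootN N (Xmax q s)) by (apply rootN_pos; lra).
  assert (rt N s j <= rootN N (Xmax q s)) by (apply rootN_mono; [exact HN | lra]).
  pose proof mu_all_bounds.
  apply Rmult_le_reg_r with (rootN N (Xmax q s)); auto.
  unfold Rdiv; rewrite Rmult_assoc, Rinv_l, Rmult_1_r by (apply Rgt_not_eq; lra).
  apply Rle_trans with (mu_all f N q s * rootN N (Xmax q s)).
  - apply Rmult_le_compat_l; lra.
  - apply Rmult_le_compat_r; lra.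
Qed.

Lemma muj_bounds j : (2 <= j <= q)%nat ->
  xi <= muj f N xi q s j /\ slope f N s j <= muj f N xi q s j /\
  muj f N xi q s j <= Rmax H xi.
Proof.
  intro hj. unfold muj.
  assert (hlam : slope f N s j <= lam f N q s j <= H).
  { unfold lam. split; [apply max_range_ge; lia|].
    apply max_range_le; [lia|]. intros; apply slope_bounds; lia. }
  pose proof (gam_le j hj). pose proof (Rmax_l H xi). pose proof (Rmax_r H xi).
  pose proof (Rmax_l (gam f N q s j) xi). pose proof (Rmax_r (gam f N q s j) xi).
  pose proof (Rmax_l (lam f N q s j) (Rmax (gam f N q s j) xi)).
  pose proof (Rmax_r (lam f N q s j) (Rmax (gam f N q s j) xi)).
  split; [lra|]. split; [lra|].
  apply Rmax_lub; [lra | apply Rmax_lub; lra].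
Qed.

Lemma newpt_bounds j : (2 <= j <= q)%nat ->
  s (j - 1)%nat + kappa r * dx s j <= newpt f N r xi q s j <= s j - kappa r * dx s j.
Proof.
  intro hj. unfold newpt, kappa.
  set (d := f (s j) - f (s (j - 1)%nat)). set (mu := muj f N xi q s j).
  pose proof (rt_pos j hj) as hrt. pose proof (dx_pos j hj) as hdx.
  destruct (muj_bounds j hj) as [hmx [hms _]]. fold mu in hms, hmx.
  (* the shift [(|d|/mu)^N / (2r)] is at most [dx/(2r)] since [|d|/mu <= dx^(1/N)] *)
  assert (hA : Rabs d / mu <= rt N s j).
  { unfold slope in hms. fold d in hms.
    apply Rmult_le_reg_r with mu; [lra|].
    unfold Rdiv; rewrite Rmult_assoc, Rinv_l, Rmult_1_r by (apply Rgt_not_eq; lra).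
    apply Rmult_le_reg_r with (/ rt N s j); [apply Rinv_0_lt_compat; lra|].
    rewrite (Rmult_comm (rt N s j) mu), Rmult_assoc, Rinv_r, Rmult_1_r
      by (apply Rgt_not_eq; lra). exact hms. }
  assert (hA0 : 0 <= Rabs d / mu) by (apply Rle_mult_inv_pos; [apply Rabs_pos | lra]).
  assert (hP : (Rabs d / mu) ^ N <= dx s j).
  { rewrite <- (rootN_pow N (dx s j)) by auto. apply pow_incr; split; auto. }
  assert (hP0 : 0 <= (Rabs d / mu) ^ N) by (apply pow_le; auto).
  assert (hinv : 0 < / (2 * r)) by (apply Rinv_0_lt_compat; lra).
  assert (hT : Rabs (/ (2 * r) * (Rabs d / mu) ^ N * sgn d) <= / (2 * r) * dx s j).
  { rewrite !Rabs_mult, (Rabs_pos_eq (/ (2 * r))), (Rabs_pos_eq ((Rabs d / mu) ^ N)) by lra.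
    pose proof (sgn_abs_le1 d).
    apply Rle_trans with (/ (2 * r) * (Rabs d / mu) ^ N * 1).
    - apply Rmult_le_compat_l; [apply Rmult_le_pos|]; lra.
    - rewrite Rmult_1_r. apply Rmult_le_compat_l; lra. }
  apply Rabs_le_bounds in hT. unfold dx in *.
  assert (E : / (2 * r) * (s j - s (j - 1)%nat) = / r * (s j - s (j - 1)%nat) / 2)
    by (field; lra).
  rewrite E in hT. split; nra.
Qed.

Lemma charR_lower j : (2 <= j <= q)%nat ->
  -2 * f (s j) + 3 * (r * xi * rt N s j) / 4 <= charR f N r xi q s j /\
  -2 * f (s (j - 1)%nat) + 3 * (r * xi * rt N s j) / 4 <= charR f N r xi q s j.
Proof.
  intro hj. unfold charR. cbv zeta.
  pose proof (rt_pos j hj). destruct (muj_bounds j hj) as [hmx _].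
  assert (r * xi * rt N s j <= r * muj f N xi q s j * rt N s j).
  { apply Rmult_le_compat_r; [lra|]. apply Rmult_le_compat_l; lra. }
  assert (0 < r * xi * rt N s j) by (apply Rmult_lt_0_compat; [apply Rmult_lt_0_compat|]; lra).
  destruct (characteristic_lower_alg (r * muj f N xi q s j * rt N s j)
              (f (s (j - 1)%nat)) (f (s j))) as [h1 h2]; [lra|].
  split; lra.
Qed.

Lemma charR_lower_near j w z : (2 <= j <= q)%nat -> 0 <= w <= 1 -> 0 < z ->
  Rabs (s j - w) <= z ^ N \/ Rabs (s (j - 1)%nat - w) <= z ^ N ->
  -2 * f w - 2 * (H * z) + 3 * (r * xi * rt N s j) / 4 <= charR f N r xi q s j.
Proof.
  intros hj hw hz hnear. destruct (charR_lower j hj) as [h1 h2].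
  destruct hnear as [hn|hn];
    (apply (holder_close f H N) in hn; auto; [|apply grid_in01; lia]);
    apply Rabs_le_bounds in hn; lra.
Qed.

Lemma charR_upper j : (2 <= j <= q)%nat ->
  charR f N r xi q s j <=
    - (f (s j) + f (s (j - 1)%nat)) + (r * Rmax H xi + H * H / (r * xi)) * rt N s j.
Proof.
  intro hj. unfold charR. cbv zeta.
  pose proof (rt_pos j hj) as hrt. destruct (muj_bounds j hj) as [hmx [_ hmH]].
  pose proof (dz_bound j hj) as hd.
  set (m := r * muj f N xi q s j * rt N s j). set (d := f (s j) - f (s (j - 1)%nat)).
  fold d in hd.
  assert (hm1 : r * xi * rt N s j <= m).
  { unfold m. apply Rmult_le_compat_r; [lra|]. apply Rmult_le_compat_l; lra. }
  assert (hm2 : m <= r * Rmax H xi * rt N s j).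
  { unfold m. apply Rmult_le_compat_r; [lra|]. apply Rmult_le_compat_l; lra. }
  assert (hm0 : 0 < r * xi * rt N s j)
    by (apply Rmult_lt_0_compat; [apply Rmult_lt_0_compat|]; lra).
  assert (hd2 : d ^ 2 <= (H * rt N s j) ^ 2).
  { rewrite <- (pow2_abs d). apply pow_incr; split; [apply Rabs_pos | auto]. }
  assert (hq : d ^ 2 / m <= H * H / (r * xi) * rt N s j).
  { apply Rle_trans with ((H * rt N s j) ^ 2 / (r * xi * rt N s j)).
    - apply Rle_trans with ((H * rt N s j) ^ 2 / m).
      + unfold Rdiv; apply Rmult_le_compat_r; [left; apply Rinv_0_lt_compat; lra | auto].
      + unfold Rdiv; apply Rmult_le_compat_l; [apply pow2_ge_0|].
        apply Rinv_le_contravar; lra.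
    - right; field; split; lra. }
  lra.
Qed.

Lemma charR_near j w z : (2 <= j <= q)%nat -> 0 <= w <= 1 -> 0 < z ->
  w - z ^ N / 2 < s (j - 1)%nat -> s j < w + z ^ N / 2 ->
  charR f N r xi q s j <= -2 * f w + (2 * H + (r * Rmax H xi + H * H / (r * xi))) * z.
Proof.
  intros hj hw hz hlo hhi.
  pose proof (charR_upper j hj) as hup. pose proof (dx_pos j hj) as hdx. unfold dx in hdx.
  assert (hzN : 0 < z ^ N) by (apply pow_lt; auto).
  assert (hrt : rt N s j <= z) by (apply rootN_le_of; auto; unfold dx; lra).
  assert (close : forall i, (1 <= i <= q)%nat -> w - z ^ N / 2 < s i < w + z ^ N / 2 ->
            f w - H * z <= f (s i)).
  { intros i hi hsi. assert (h : Rabs (s i - w) <= z ^ N) by (apply Rabs_le; lra).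
    apply (holder_close f H N) in h; auto; [|apply grid_in01; lia].
    apply Rabs_le_bounds in h; lra. }
  pose proof (close j ltac:(lia) ltac:(lra)). pose proof (close (j - 1)%nat ltac:(lia) ltac:(lra)).
  assert (0 < r * Rmax H xi + H * H / (r * xi)).
  { pose proof (Rmax_l H xi).
    assert (0 < H * H / (r * xi)) by (apply Rdiv_lt_0_compat; nra). nra. }
  assert ((r * Rmax H xi + H * H / (r * xi)) * rt N s j <= (r * Rmax H xi + H * H / (r * xi)) * z)
    by (apply Rmult_le_compat_l; lra).
  nra.
Qed.

End Grid.

Lemma isolated_from_list x (L : list R) :
  exists d, 0 < d /\ forall z, In z L -> z = x \/ d <= Rabs (z - x).
Proof.
  induction L as [|a L IH]; [exists 1; split; [lra | intros z []]|].
  destruct IH as [d [hd h]].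
  destruct (Req_dec a x) as [e|e].
  - exists d. split; [auto|]. intros z [<-|hz]; [left; auto | auto].
  - assert (0 < Rabs (a - x)) by (apply Rabs_pos_lt; lra).
    exists (Rmin d (Rabs (a - x))). split; [apply Rmin_pos; lra|].
    pose proof (Rmin_l d (Rabs (a - x))). pose proof (Rmin_r d (Rabs (a - x))).
    intros z [<-|hz]; [right; lra|]. destruct (h z hz); [left; auto | right; lra].
Qed.

Lemma clamped_continuous c : continuity_pt (fun x => f (Rmax 0 (Rmin 1 x))) c.
Proof.
  intros eps heps.
  set (z := eps / (2 * H)). assert (hz : 0 < z) by (apply Rdiv_lt_0_compat; lra).
  exists (z ^ N). split; [apply pow_lt; auto|]. intros x [_ hx]. simpl in *. unfold R_dist in *.
  assert (h01 : forall w, 0 <= Rmax 0 (Rmin 1 w) <= 1)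
    by (intro w; unfold Rmax, Rmin; repeat destruct (Rle_dec _ _); lra).
  eapply Rle_lt_trans; [apply (holder_close f H N _ _ z); auto|].
  - apply Rle_trans with (Rabs (x - c)); [|lra].
    unfold Rmax, Rmin. repeat destruct (Rle_dec _ _); unfold Rabs; repeat destruct (Rcase_abs _); lra.
  - unfold z. replace (H * (eps / (2 * H))) with (eps / 2) by (field; lra). lra.
Qed.

Lemma interior_local_min u y v : 0 <= u -> u < y -> y < v -> v <= 1 ->
  f y < f u -> f y < f v -> exists m, u < m < v /\ local_min_on01 f m.
Proof.
  intros h1 h2 h3 h4 h5 h6.
  set (g := fun x => f (Rmax 0 (Rmin 1 x))).
  assert (hg : forall w, 0 <= w <= 1 -> g w = f w).
  { intros w hw. unfold g. f_equal. unfold Rmax, Rmin. repeat destruct (Rle_dec _ _); lra. }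
  destruct (continuity_ab_min g u v ltac:(lra) (fun c _ => clamped_continuous c)) as [m [hmin hm]].
  assert (gm : g m <= f y) by (rewrite <- (hg y) by lra; apply hmin; lra).
  assert (m <> u) by (intro e; subst m; rewrite hg in gm by lra; lra).
  assert (m <> v) by (intro e; subst m; rewrite hg in gm by lra; lra).
  exists m. split; [lra|]. split; [lra|].
  exists (Rmin (m - u) (v - m)). split; [apply Rmin_pos; lra|].
  intros y' hy' hd. pose proof (Rmin_l (m - u) (v - m)). pose proof (Rmin_r (m - u) (v - m)).
  apply Rabs_def2 in hd. rewrite <- (hg m), <- (hg y') by lra. apply hmin; lra.
Qed.

(** With finitely many local extrema, a point [xb] is a one-sided local minimizer
    as soon as values [>= f(xb)] occur arbitrarily close to it on that side: a
    lower value in between would produce a local minimizer arbitrarily close. *)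
Lemma right_local_min xb : 0 <= xb -> finitely_many_local_extrema f ->
  (forall d, 0 < d -> exists y, xb < y < xb + d /\ y <= 1 /\ f xb <= f y) ->
  exists d, 0 < d /\ forall y, 0 <= y <= 1 -> xb <= y < xb + d -> f xb <= f y.
Proof.
  intros hxb [L hL] hsample.
  destruct (isolated_from_list xb L) as [d0 [hd0 hiso]].
  destruct (hsample d0 hd0) as [y1 [hy1 [hy1' hf1]]].
  exists (y1 - xb). split; [lra|]. intros y hy [hy2 hy3]. apply Rnot_lt_le. intro hlt.
  assert (xb < y) by (destruct (Req_dec xb y); [subst; lra | lra]).
  destruct (hsample (y - xb) ltac:(lra)) as [y2 [hy4 [_ hf2]]].
  destruct (interior_local_min y2 y y1) as [m [hm hmin]]; try lra.
  destruct (hiso m (hL m (or_introl hmin))); [lra|].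
  rewrite Rabs_pos_eq in *; lra.
Qed.

Lemma left_local_min xb : xb <= 1 -> finitely_many_local_extrema f ->
  (forall d, 0 < d -> exists y, xb - d < y < xb /\ 0 <= y /\ f xb <= f y) ->
  exists d, 0 < d /\ forall y, 0 <= y <= 1 -> xb - d < y <= xb -> f xb <= f y.
Proof.
  intros hxb [L hL] hsample.
  destruct (isolated_from_list xb L) as [d0 [hd0 hiso]].
  destruct (hsample d0 hd0) as [y1 [hy1 [hy1' hf1]]].
  exists (xb - y1). split; [lra|]. intros y hy [hy2 hy3]. apply Rnot_lt_le. intro hlt.
  assert (y < xb) by (destruct (Req_dec xb y); [subst; lra | lra]).
  destruct (hsample (xb - y) ltac:(lra)) as [y2 [hy4 [_ hf2]]].
  destruct (interior_local_min y1 y y2) as [m [hm hmin]]; try lra.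
  destruct (hiso m (hL m (or_introl hmin))); [lra|].
  rewrite Rabs_left in *; lra.
Qed.

Lemma local_min_from_samples xb : 0 <= xb <= 1 -> finitely_many_local_extrema f ->
  (xb < 1 -> forall d, 0 < d -> exists y, xb < y < xb + d /\ y <= 1 /\ f xb <= f y) ->
  (0 < xb -> forall d, 0 < d -> exists y, xb - d < y < xb /\ 0 <= y /\ f xb <= f y) ->
  local_min_on01 f xb.
Proof.
  intros hxb hfin hright hleft. split; [auto|].
  assert (R : exists d, 0 < d /\ forall y, 0 <= y <= 1 -> xb <= y < xb + d -> f xb <= f y).
  { destruct (Rlt_dec xb 1) as [c|c]; [apply right_local_min; auto; lra|].
    exists 1. split; [lra|]. intros y hy hy'. replace y with xb by lra. lra. }
  assert (L : exists d, 0 < d /\ forall y, 0 <= y <= 1 -> xb - d < y <= xb -> f xb <= f y).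
  { destruct (Rlt_dec 0 xb) as [c|c]; [apply left_local_min; auto; lra|].
    exists 1. split; [lra|]. intros y hy hy'. replace y with xb by lra. lra. }
  destruct R as [d1 [hd1 h1]]. destruct L as [d2 [hd2 h2]].
  exists (Rmin d1 d2). split; [apply Rmin_pos; auto|].
  pose proof (Rmin_l d1 d2). pose proof (Rmin_r d1 d2).
  intros y hy hd. apply Rabs_def2 in hd.
  destruct (Rle_dec xb y); [apply h1 | apply h2]; auto; lra.
Qed.

Lemma grid_of_sorted (X : nat -> R) q s : sorted_arrangement X q s -> (2 <= q)%nat ->
  (forall k, (1 <= k <= q)%nat -> 0 <= X k <= 1) -> increasing_grid q s.
Proof.
  intros [hinc [hval _]] hq h01. split; [auto|]. split; [auto|].
  intros i hi. destruct (hval i hi) as [k [hk ->]]. auto.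
Qed.

Section Run.
Variables (X : nat -> R) (qs : nat -> nat).
Hypothesis (Hrun : PLT_run f N r xi X qs).

Definition is_trial (l : nat) (y : R) : Prop := exists k, (1 <= k <= qs l)%nat /\ X k = y.

Definition step_data (l : nat) (s : nat -> R) (p : nat) (t : nat -> nat) : Prop :=
  sorted_arrangement X (qs l) s /\
  (1 <= p <= qs l - 1)%nat /\ qs (S l) = (qs l + p)%nat /\
  (forall k, (1 <= k <= p)%nat -> (2 <= t k <= qs l)%nat) /\
  (forall k k', (1 <= k <= p)%nat -> (1 <= k' <= p)%nat -> t k = t k' -> k = k') /\
  (forall k, (1 <= k <= p)%nat -> forall i, (2 <= i <= qs l)%nat ->
     (forall k', (1 <= k' < k)%nat -> i <> t k') ->
     charR f N r xi (qs l) s i <= charR f N r xi (qs l) s (t k)) /\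
  (forall k, (1 <= k <= p)%nat -> X (qs l + k)%nat = newpt f N r xi (qs l) s (t k)).

Lemma step_exists l : (1 <= l)%nat -> exists s p t, step_data l s p t.
Proof.
  intro hl. destruct Hrun as [_ [_ [_ [_ [_ hstep]]]]].
  destruct (hstep l hl) as [s [hs [p [t h]]]]. exists s, p, t. split; auto.
Qed.

Lemma qs_step l : (1 <= l)%nat -> (qs l < qs (S l))%nat.
Proof. intro hl. destruct (step_exists l hl) as [s [p [t [_ [hp [e _]]]]]]. lia. Qed.

Lemma qs_ge l : (1 <= l)%nat -> (l + 1 <= qs l)%nat.
Proof.
  intro hl. induction l as [|l IH]; [lia|].
  destruct (Nat.eq_dec l 0) as [->|ne]; [destruct Hrun; lia|].
  pose proof (qs_step l ltac:(lia)). specialize (IH ltac:(lia)). lia.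
Qed.

Lemma qs_mono l l' : (1 <= l)%nat -> (l <= l')%nat -> (qs l <= qs l')%nat.
Proof.
  intros hl hll. induction l' as [|l' IH]; [lia|].
  destruct (Nat.eq_dec l (S l')) as [->|ne]; [lia|].
  pose proof (qs_step l' ltac:(lia)). specialize (IH ltac:(lia)). lia.
Qed.

(** All trials lie in [0,1]: new points are interior to existing intervals. *)
Lemma trials_in01_upto l : (1 <= l)%nat -> forall k, (1 <= k <= qs l)%nat -> 0 <= X k <= 1.
Proof.
  intro hl. induction l as [|l IH]; [lia|].
  destruct (Nat.eq_dec l 0) as [->|ne].
  - destruct Hrun as [_ [h1 [h2 [h3 _]]]]. intros k hk.
    destruct (Nat.eq_dec k 1) as [->|n1]; [rewrite h1; lra|].
    destruct (Nat.eq_dec k 2) as [->|n2]; [rewrite h2; lra|].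
    specialize (h3 k ltac:(lia)); lra.
  - specialize (IH ltac:(lia)). intros k hk.
    destruct (Nat.le_gt_cases k (qs l)) as [c|c]; [apply IH; lia|].
    destruct (step_exists l ltac:(lia)) as [s [p [t [Hs [hp [e [ht [_ [_ hX]]]]]]]]].
    pose proof (qs_ge l ltac:(lia)).
    assert (Hg : increasing_grid (qs l) s) by (apply (grid_of_sorted X); auto; lia).
    set (j := t (k - qs l)%nat). assert (hj : (2 <= j <= qs l)%nat) by (apply ht; lia).
    replace k with (qs l + (k - qs l))%nat by lia. rewrite hX by lia. fold j.
    pose proof (newpt_bounds _ _ Hg j hj). pose proof (dx_pos _ _ Hg j hj).
    pose proof (grid_in01 _ _ Hg j ltac:(lia)). pose proof (grid_in01 _ _ Hg (j - 1) ltac:(lia)).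
    pose proof (kappa_bounds r Hr).
    assert (0 < kappa r * dx s j) by (apply Rmult_lt_0_compat; lra).
    lra.
Qed.

Lemma trial_in01 k : (1 <= k)%nat -> 0 <= X k <= 1.
Proof. intro hk. apply (trials_in01_upto k hk). pose proof (qs_ge k hk). lia. Qed.

Lemma is_trial_mono l l' y : (1 <= l)%nat -> (l <= l')%nat -> is_trial l y -> is_trial l' y.
Proof. intros h1 h2 [k [hk e]]. exists k; split; auto. pose proof (qs_mono l l' h1 h2). lia. Qed.

Lemma is_trial_0 l : (1 <= l)%nat -> is_trial l 0.
Proof. intro hl. exists 1%nat. destruct Hrun as [_ [h _]]. pose proof (qs_ge l hl). split; [lia | auto]. Qed.

Lemma is_trial_1 l : (1 <= l)%nat -> is_trial l 1.
Proof. intro hl. exists 2%nat. destruct Hrun as [_ [_ [h _]]]. pose proof (qs_ge l hl). split; [lia | auto]. Qed.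

Lemma is_trial_index l k : (1 <= l)%nat -> (1 <= k <= l)%nat -> is_trial l (X k).
Proof. intros hl hk. exists k. pose proof (qs_ge l hl). split; [lia | auto]. Qed.

Lemma trial_created L q : (1 <= L)%nat -> (qs L < q)%nat ->
  exists l, (L <= l)%nat /\ (qs l < q <= qs (S l))%nat.
Proof.
  intros hL hq.
  assert (H0 : forall n, (q <= qs (L + n))%nat ->
            exists l, (L <= l)%nat /\ (qs l < q <= qs (S l))%nat).
  { induction n as [|n IH]; intro h; [rewrite Nat.add_0_r in h; lia|].
    destruct (Nat.le_gt_cases q (qs (L + n))) as [c|c]; [apply IH; auto|].
    exists (L + n)%nat. replace (S (L + n)) with (L + S n)%nat by lia. split; lia. }
  apply (H0 q). pose proof (qs_ge (L + q) ltac:(lia)). lia.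
Qed.

Section Iteration.
Variables (l : nat) (s : nat -> R) (p : nat) (t : nat -> nat).
Hypothesis (HW : step_data l s p t).

Lemma step_size : (1 <= p <= qs l - 1)%nat /\ qs (S l) = (qs l + p)%nat.
Proof. destruct HW as [_ [hp [e _]]]. auto. Qed.

Lemma step_grid : increasing_grid (qs l) s.
Proof.
  apply (grid_of_sorted X); [apply HW | pose proof step_size; lia|].
  intros k hk; apply trial_in01; lia.
Qed.

Lemma step_index k : (1 <= k <= p)%nat -> (2 <= t k <= qs l)%nat.
Proof. destruct HW as [_ [_ [_ [ht _]]]]. auto. Qed.

Lemma is_trial_grid y : is_trial l y <-> exists i, (1 <= i <= qs l)%nat /\ s i = y.
Proof.
  destruct HW as [[_ [hval hall]] _]. split.
  - intros [k [hk <-]]. auto.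
  - intros [i [hi <-]]. destruct (hval i hi) as [k [hk e]]. exists k; auto.
Qed.

Lemma grid_is_trial i : (1 <= i <= qs l)%nat -> is_trial l (s i).
Proof. intro hi. apply is_trial_grid. eauto. Qed.

Lemma trial_outside_interval y j : is_trial l y -> (2 <= j <= qs l)%nat ->
  ~ (s (j - 1)%nat < y < s j).
Proof.
  intros hy hj [h1 h2]. destruct (proj1 (is_trial_grid y) hy) as [i [hi <-]].
  pose proof (grid_lt_inv _ _ step_grid (j - 1) i ltac:(lia) hi h1).
  pose proof (grid_lt_inv _ _ step_grid i j hi ltac:(lia) h2). lia.
Qed.

Lemma new_trial k : (1 <= k <= p)%nat ->
  is_trial (S l) (X (qs l + k)%nat) /\ ~ is_trial l (X (qs l + k)%nat) /\
  s (t k - 1)%nat + kappa r * dx s (t k) <= X (qs l + k)%nat <= s (t k) - kappa r * dx s (t k).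
Proof.
  intro hk. destruct HW as [_ [_ [e [ht [_ [_ hX]]]]]].
  pose proof (newpt_bounds _ _ step_grid (t k) (ht k hk)) as hb.
  pose proof (dx_pos _ _ step_grid (t k) (ht k hk)) as hd.
  pose proof (kappa_bounds r Hr).
  assert (0 < kappa r * dx s (t k)) by (apply Rmult_lt_0_compat; lra).
  rewrite <- (hX k hk) in hb. split; [|split; [|auto]].
  - exists (qs l + k)%nat. split; [lia | auto].
  - intro hin. apply (trial_outside_interval _ (t k) hin (ht k hk)). lra.
Qed.

Lemma must_be_selected k0 j : (1 <= k0 <= p)%nat -> (2 <= j <= qs l)%nat ->
  charR f N r xi (qs l) s (t k0) < charR f N r xi (qs l) s j ->
  exists k, (1 <= k <= p)%nat /\ t k = j.
Proof.
  intros hk0 hj hlt. destruct HW as [_ [_ [_ [_ [_ [hmax _]]]]]].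
  apply NNPP. intro c.
  assert (charR f N r xi (qs l) s j <= charR f N r xi (qs l) s (t k0)); [|lra].
  apply hmax; auto. intros k' hk' e. apply c. exists k'; split; [lia | auto].
Qed.

Lemma interval_containing c : 0 < c < 1 -> ~ is_trial l c ->
  exists j, (2 <= j <= qs l)%nat /\ s (j - 1)%nat < c < s j.
Proof.
  intros hc hn. pose proof step_size as hq.
  assert (hne : forall i, (1 <= i <= qs l)%nat -> s i <> c)
    by (intros i hi e; apply hn, is_trial_grid; eauto).
  assert (h1 : s 1%nat <= c).
  { destruct (proj1 (is_trial_grid 0)) as [i [hi e]].
    { exists 1%nat. destruct Hrun as [_ [h _]]. split; [lia | auto]. }
    pose proof (grid_le _ _ step_grid 1 i ltac:(lia) ltac:(lia) ltac:(lia)). lra. }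
  assert (h2 : c < s (qs l)).
  { destruct (proj1 (is_trial_grid 1)) as [i [hi e]].
    { exists 2%nat. destruct Hrun as [_ [_ [h _]]]. split; [lia | auto]. }
    pose proof (grid_le _ _ step_grid i (qs l) ltac:(lia) ltac:(lia) ltac:(lia)). lra. }
  assert (scan : forall n, (1 + n <= qs l)%nat -> c < s (1 + n)%nat ->
            exists j, (2 <= j <= 1 + n)%nat /\ s (j - 1)%nat <= c < s j).
  { induction n as [|n IH]; intros hn1 hlt; [simpl in hlt; lra|].
    destruct (Rlt_dec c (s (1 + n)%nat)) as [cc|cc].
    - destruct (IH ltac:(lia) cc) as [j [hj e]]. exists j; split; [lia | auto].
    - exists (2 + n)%nat. replace (2 + n - 1)%nat with (1 + n)%nat by lia.
      replace (2 + n)%nat with (1 + S n)%nat by lia. split; [lia | lra]. }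
  destruct (scan (qs l - 1)%nat ltac:(lia)) as [j [hj [e1 e2]]].
  { replace (1 + (qs l - 1))%nat with (qs l) by lia. auto. }
  exists j. split; [lia|]. split; auto.
  destruct e1 as [e1|e1]; auto. exfalso; apply (hne (j - 1)%nat); [lia | auto].
Qed.

End Iteration.

Lemma limit_point_in01 x : limit_point X x -> 0 <= x <= 1.
Proof.
  intros hlim. split; apply Rnot_lt_le; intro c.
  - destruct (hlim (- x) ltac:(lra) 1%nat) as [q [_ [hq h]]].
    pose proof (trial_in01 q hq). apply Rabs_def2 in h. lra.
  - destruct (hlim (x - 1) ltac:(lra) 1%nat) as [q [_ [hq h]]].
    pose proof (trial_in01 q hq). apply Rabs_def2 in h. lra.
Qed.

(** If from stage [L] on no selected interval lies inside [(xb-eps, xb+eps)],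
    each new trial within [eps/2] of the limit point [xb] is created in an
    interval of length [>= eps/2] reaching outside the window, and so moves
    the nearest trials [lo < xb + eps], [hi > xb - eps] closer by
    [kappa r * eps/2]: after [K] such trials, [hi - lo <= 1 - K kappa eps/2]. *)
Lemma far_selections_narrow xb eps L : limit_point X xb -> 0 < eps -> (1 <= L)%nat ->
  (forall l s p t k, (L <= l)%nat -> step_data l s p t -> (1 <= k <= p)%nat ->
     s (t k - 1)%nat <= xb - eps \/ xb + eps <= s (t k)) ->
  forall K, exists l, (L <= l)%nat /\ exists lo hi, is_trial l lo /\ is_trial l hi /\
    xb - eps < hi /\ lo < xb + eps /\ hi - lo <= 1 - INR K * (kappa r * (eps / 2)).
Proof.
  intros hlim heps hL hfar. pose proof (kappa_bounds r Hr) as hk.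
  pose proof (limit_point_in01 xb hlim).
  induction K as [|K IH].
  { exists L. split; [lia|]. exists 0, 1.
    split; [apply is_trial_0; auto|]. split; [apply is_trial_1; auto|]. simpl; lra. }
  destruct IH as [l [hl [lo [hi [hlo [hhi [h1 [h2 h3]]]]]]]].
  destruct (hlim (eps / 2) ltac:(lra) (S (qs l))) as [q [hq1 [hq2 hq3]]].
  apply Rabs_def2 in hq3.
  destruct (trial_created l q ltac:(lia) ltac:(lia)) as [l' [hll' [hq4 hq5]]].
  destruct (step_exists l' ltac:(lia)) as [s [p [t HW]]].
  destruct (step_size l' s p t HW) as [hp e].
  set (k := (q - qs l')%nat). assert (hk1 : (1 <= k <= p)%nat) by (unfold k; lia).
  destruct (new_trial l' s p t HW k hk1) as [hnew [_ [hb1 hb2]]].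
  replace (qs l' + k)%nat with q in * by (unfold k; lia).
  pose proof (step_index l' s p t HW k hk1) as hj.
  pose proof (hfar l' s p t k ltac:(lia) HW hk1) as hside. set (j := t k) in *.
  assert (hlo' : is_trial l' lo) by (apply (is_trial_mono l l'); auto; lia).
  assert (hhi' : is_trial l' hi) by (apply (is_trial_mono l l'); auto; lia).
  pose proof (trial_outside_interval l' s p t HW lo j hlo' hj) as nlo.
  pose proof (trial_outside_interval l' s p t HW hi j hhi' hj) as nhi.
  pose proof (dx_pos _ _ (step_grid l' s p t HW) j hj) as hdx. unfold dx in *.
  assert (0 <= kappa r * (s j - s (j - 1)%nat)) by (apply Rmult_le_pos; lra).
  assert (hstep : kappa r * (eps / 2) <= kappa r * (s j - s (j - 1)%nat)).
  { apply Rmult_le_compat_l; [lra|].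
    destruct hside; lra. }
  exists (S l'). split; [lia|]. rewrite S_INR.
  destruct hside as [far|far].
  - (* the new trial becomes the new [hi] *)
    assert (s j <= hi) by (apply Rnot_lt_le; intro; apply nhi; lra).
    exists lo, (X q). split; [apply (is_trial_mono l' (S l')); auto; lia|].
    split; [auto | lra].
  - (* the new trial becomes the new [lo] *)
    assert (lo <= s (j - 1)%nat) by (apply Rnot_lt_le; intro; apply nlo; lra).
    exists (X q), hi. split; [auto|]. split; [apply (is_trial_mono l' (S l')); auto; lia | lra].
Qed.

Lemma selected_near_limit xb eps L : limit_point X xb -> 0 < eps -> (1 <= L)%nat ->
  exists l s p t k, (L <= l)%nat /\ step_data l s p t /\ (1 <= k <= p)%nat /\
    xb - eps < s (t k - 1)%nat /\ s (t k) < xb + eps.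
Proof.
  intros hlim heps hL. apply NNPP. intro hnone.
  assert (hfar : forall l s p t k, (L <= l)%nat -> step_data l s p t -> (1 <= k <= p)%nat ->
            s (t k - 1)%nat <= xb - eps \/ xb + eps <= s (t k)).
  { intros l s p t k hl HW hk.
    destruct (Rle_dec (s (t k - 1)%nat) (xb - eps)); [left; auto|].
    destruct (Rle_dec (xb + eps) (s (t k))); [right; auto|].
    exfalso; apply hnone; exists l, s, p, t, k.
    split; [auto | split; [auto | split; [auto | split; lra]]]. }
  pose proof (kappa_bounds r Hr).
  assert (heta : 0 < kappa r * (eps / 2)) by (apply Rmult_lt_0_compat; lra).
  destruct (INR_archimed (kappa r * (eps / 2)) (1 + 2 * eps) heta) as [K hK].
  destruct (far_selections_narrow xb eps L hlim heps hL hfar K)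
    as [l [_ [lo [hi [_ [_ [h1 [h2 h3]]]]]]]].
  lra.
Qed.

Lemma small_characteristic_selected xb T0 L : limit_point X xb -> -2 * f xb < T0 ->
  (1 <= L)%nat -> exists l s p t k0, (L <= l)%nat /\ step_data l s p t /\
    (1 <= k0 <= p)%nat /\ charR f N r xi (qs l) s (t k0) < T0.
Proof.
  intros hlim hT0 hL. pose proof (limit_point_in01 xb hlim) as hxb.
  set (K := 2 * H + (r * Rmax H xi + H * H / (r * xi))).
  assert (hK : 0 < K).
  { unfold K. pose proof (Rmax_l H xi).
    assert (0 < H * H / (r * xi)) by (apply Rdiv_lt_0_compat; nra). nra. }
  set (z := (T0 + 2 * f xb) / (2 * K)).
  assert (hz : 0 < z) by (apply Rdiv_lt_0_compat; lra).
  assert (hKz : K * z = (T0 + 2 * f xb) / 2) by (unfold z; field; lra).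
  assert (hzN : 0 < z ^ N) by (apply pow_lt; auto).
  destruct (selected_near_limit xb (z ^ N / 2) L hlim ltac:(lra) hL)
    as [l [s [p [t [k [hl [HW [hk [h1 h2]]]]]]]]].
  exists l, s, p, t, k. split; [auto | split; [auto | split; [auto|]]].
  pose proof (charR_near _ _ (step_grid l s p t HW) (t k) xb z
                (step_index l s p t HW k hk) hxb hz h1 h2) as hnear.
  fold K in hnear. lra.
Qed.

Definition trial_free (u v : R) : Prop := forall k, (1 <= k)%nat -> ~ (u < X k < v).

(** An interval spanning a trial-free gap (u,v) cannot keep a characteristic
    above a level [T0 > -2 f(xb)]: it would be split whenever a selected
    characteristic falls below [T0], i.e. infinitely often, each split leaving
    the gap in a piece at most [(1 - kappa r)] times as long. *)
Section GapInterval.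
Variables (u v xb T0 : R) (L0 : nat).
Hypotheses (hu : 0 <= u) (huv : u < v) (hv : v <= 1) (hfree : trial_free u v)
  (hlim : limit_point X xb) (hT0 : -2 * f xb < T0).
Hypothesis hforced : forall l s p t j, (L0 <= l)%nat -> step_data l s p t ->
  (2 <= j <= qs l)%nat -> s (j - 1)%nat <= u -> v <= s j -> T0 <= charR f N r xi (qs l) s j.

Lemma trial_outside_gap l y : is_trial l y -> ~ (u < y < v).
Proof. intros [k [hk <-]]; apply hfree; lia. Qed.

Lemma gap_bracket_shrinks l a b : (1 <= l)%nat -> is_trial l a -> is_trial l b ->
  a <= u -> v <= b -> exists l' a' b', (1 <= l')%nat /\ is_trial l' a' /\ is_trial l' b' /\
    a' <= u /\ v <= b' /\ b' - a' <= (1 - kappa r) * (b - a).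
Proof.
  intros hl ha hb hau hvb. pose proof (kappa_bounds r Hr) as hk.
  destruct (small_characteristic_selected xb T0 (Nat.max l L0) hlim hT0 ltac:(lia))
    as [l' [s [p [t [k0 [hl' [HW [hk0 hsmall]]]]]]]].
  (* the grid interval [j] containing the midpoint of the gap spans the gap *)
  set (c := (u + v) / 2).
  assert (hc_out : ~ is_trial l' c) by (intro hc; apply (trial_outside_gap l' c hc); unfold c; lra).
  destruct (interval_containing l' s p t HW c ltac:(unfold c; lra) hc_out) as [j [hj [hc1 hc2]]].
  pose proof (grid_is_trial l' s p t HW) as hgrid.
  assert (hlo : s (j - 1)%nat <= u).
  { apply Rnot_lt_le; intro. apply (trial_outside_gap l' _ (hgrid (j - 1)%nat ltac:(lia))).
    unfold c in *; lra. }
  assert (hhi : v <= s j).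
  { apply Rnot_lt_le; intro. apply (trial_outside_gap l' _ (hgrid j ltac:(lia))).
    unfold c in *; lra. }
  (* it beats a selected interval, so it is split by a new trial [w] outside the gap *)
  pose proof (hforced l' s p t j ltac:(lia) HW hj hlo hhi) as hRj.
  destruct (must_be_selected l' s p t HW k0 j hk0 hj ltac:(lra)) as [k [hk1 <-]].
  destruct (new_trial l' s p t HW k hk1) as [hw [_ [hb1 hb2]]].
  set (w := X (qs l' + k)%nat) in *.
  pose proof (dx_pos _ _ (step_grid l' s p t HW) (t k) hj) as hdx. unfold dx in *.
  assert (a <= s (t k - 1)%nat).
  { apply Rnot_lt_le; intro. apply (trial_outside_interval l' s p t HW a (t k)); [|auto|lra].
    apply (is_trial_mono l l'); auto; lia. }
  assert (s (t k) <= b).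
  { apply Rnot_lt_le; intro. apply (trial_outside_interval l' s p t HW b (t k)); [|auto|lra].
    apply (is_trial_mono l l'); auto; lia. }
  assert ((1 - kappa r) * (s (t k) - s (t k - 1)%nat) <= (1 - kappa r) * (b - a))
    by (apply Rmult_le_compat_l; lra).
  assert ((s (t k) - s (t k - 1)%nat) * kappa r > 0) by (apply Rmult_lt_0_compat; lra).
  assert (hsj : is_trial (S l') (s (t k)))
    by (apply (is_trial_mono l'); [lia | lia | apply hgrid; lia]).
  assert (hsj1 : is_trial (S l') (s (t k - 1)%nat))
    by (apply (is_trial_mono l'); [lia | lia | apply hgrid; lia]).
  exists (S l').
  destruct (Rle_dec w u) as [cw|cw].
  - exists w, (s (t k)). split; [lia|]. repeat (split; auto); lra.
  - assert (v <= w) by (apply Rnot_lt_le; intro; apply (trial_outside_gap (S l') w hw); lra).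
    exists (s (t k - 1)%nat), w. split; [lia|]. repeat (split; auto); lra.
Qed.

Lemma gap_interval_not_forced : False.
Proof.
  pose proof (kappa_bounds r Hr) as hk.
  assert (brackets : forall K, exists l a b, (1 <= l)%nat /\ is_trial l a /\ is_trial l b /\
            a <= u /\ v <= b /\ b - a <= (1 - kappa r) ^ K).
  { induction K as [|K IH].
    - exists 1%nat, 0, 1. split; [lia|].
      split; [apply is_trial_0; lia|]. split; [apply is_trial_1; lia|]. simpl; lra.
    - destruct IH as [l [a [b [hl [ha [hb [hau [hvb hba]]]]]]]].
      destruct (gap_bracket_shrinks l a b hl ha hb hau hvb)
        as [l' [a' [b' [hl' [ha' [hb' [hau' [hvb' hba']]]]]]]].
      exists l', a', b'. repeat (split; auto). simpl.
      apply Rle_trans with ((1 - kappa r) * (b - a)); [auto | apply Rmult_le_compat_l; lra]. }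
  destruct (pow_lt_1_zero (1 - kappa r) ltac:(rewrite Rabs_pos_eq; lra) (v - u) ltac:(lra))
    as [K hK].
  specialize (hK K (Nat.le_refl K)). rewrite Rabs_pos_eq in hK by (apply pow_le; lra).
  destruct (brackets K) as [l [a [b [_ [_ [_ [hau [hvb hba]]]]]]]]. lra.
Qed.

End GapInterval.

(** Hence a limit point is never an endpoint of a trial-free gap: the interval
    spanning the gap has an endpoint close to [xb] and length [>= v - u], so its
    characteristic stays above [-2 f(xb) + theta/2]. *)
Lemma limit_not_at_gap_end u v xb : 0 <= u -> u < v -> v <= 1 -> trial_free u v ->
  limit_point X xb -> xb = u \/ xb = v -> False.
Proof.
  intros hu huv hv hfree hlim hend. pose proof (limit_point_in01 xb hlim) as hxb.
  assert (hroot : 0 < rootN N (v - u)) by (apply rootN_pos; lra).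
  set (theta := 3 * (r * xi * rootN N (v - u)) / 4).
  assert (hth : 0 < theta) by (unfold theta; assert (0 < r * xi) by nra; nra).
  set (z := theta / (8 * H)). assert (hz : 0 < z) by (apply Rdiv_lt_0_compat; lra).
  assert (hHz : H * z = theta / 8) by (unfold z; field; lra).
  assert (hzN : 0 < z ^ N) by (apply pow_lt; auto).
  destruct (hlim (Rmin (z ^ N) (v - u)) ltac:(apply Rmin_pos; lra) 1%nat)
    as [q0 [_ [hq0 hclose]]].
  pose proof (Rmin_l (z ^ N) (v - u)). pose proof (Rmin_r (z ^ N) (v - u)).
  apply Rabs_def2 in hclose.
  assert (hq0out : ~ (u < X q0 < v)) by (apply hfree; auto).
  apply (gap_interval_not_forced u v xb (-2 * f xb + theta / 2) q0 hu huv hv hfree hlim);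
    [lra |].
  intros l s p t j hl HW hj hlo hhi.
  assert (hl1 : (1 <= l)%nat) by lia.
  pose proof (trial_outside_interval l s p t HW (X q0) j
                (is_trial_index l q0 hl1 ltac:(lia)) hj) as hout.
  (* the endpoint of the spanning interval on the side of [xb] is [z^N]-close to [xb] *)
  assert (hnear : Rabs (s j - xb) <= z ^ N \/ Rabs (s (j - 1)%nat - xb) <= z ^ N).
  { destruct hend as [->| ->]; [right | left]; apply Rabs_le.
    - assert (X q0 <= s (j - 1)%nat) by (apply Rnot_lt_le; intro; apply hout; lra). lra.
    - assert (s j <= X q0) by (apply Rnot_lt_le; intro; apply hout; lra). lra. }
  pose proof (charR_lower_near _ _ (step_grid l s p t HW) j xb z hj hxb hz hnear).
  assert (rootN N (v - u) <= rt N s j) by (apply rootN_mono; auto; unfold dx; lra).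
  assert (theta <= 3 * (r * xi * rt N s j) / 4) by (unfold theta; assert (0 < r * xi) by nra; nra).
  lra.
Qed.

Lemma sequence_gap_below (Y : nat -> R) b e n : 0 < e ->
  (forall q, (n <= q)%nat -> (1 <= q)%nat -> ~ (b - e < Y q < b)) ->
  exists u, b - e <= u < b /\ forall k, (1 <= k)%nat -> ~ (u < Y k < b).
Proof.
  intros he hlate.
  (* the finitely many earlier terms are avoided by raising the lower end *)
  assert (early : forall m, exists u, b - e <= u < b /\
            forall k, (1 <= k <= m)%nat -> ~ (u < Y k < b)).
  { induction m as [|m IH]; [exists (b - e); split; [lra | intros; lia]|].
    destruct IH as [u [hu hk]].
    destruct (classic (u < Y (S m) < b)) as [c|c].
    - exists (Y (S m)). split; [lra|]. intros k hk1 hin.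
      destruct (Nat.eq_dec k (S m)) as [->|ne]; [lra|]. apply (hk k ltac:(lia)). lra.
    - exists u. split; auto. intros k hk1.
      destruct (Nat.eq_dec k (S m)) as [->|ne]; auto. apply hk; lia. }
  destruct (early n) as [u [hu hearly]]. exists u. split; auto.
  intros k hk hin. destruct (Nat.le_gt_cases k n) as [c|c]; [apply (hearly k); auto; lia|].
  apply (hlate k); [lia | lia | lra].
Qed.

Lemma trials_left_of_limit xb : 0 < xb -> limit_point X xb ->
  forall eps n, 0 < eps -> exists q, (n <= q)%nat /\ (1 <= q)%nat /\ xb - eps < X q < xb.
Proof.
  intros hxb hlim eps n heps. apply NNPP; intro hnone.
  pose proof (limit_point_in01 xb hlim).
  pose proof (Rmin_l eps xb). pose proof (Rmin_r eps xb). set (e := Rmin eps xb) in *.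
  destruct (sequence_gap_below X xb e n ltac:(apply Rmin_pos; lra)) as [u [hu hfree]].
  { intros q hq hq1 hin. apply hnone. exists q. repeat (split; auto); lra. }
  apply (limit_not_at_gap_end u xb xb); auto; lra.
Qed.

Lemma trials_right_of_limit xb : xb < 1 -> limit_point X xb ->
  forall eps n, 0 < eps -> exists q, (n <= q)%nat /\ (1 <= q)%nat /\ xb < X q < xb + eps.
Proof.
  intros hxb hlim eps n heps. apply NNPP; intro hnone.
  pose proof (limit_point_in01 xb hlim).
  pose proof (Rmin_l eps (1 - xb)). pose proof (Rmin_r eps (1 - xb)).
  set (e := Rmin eps (1 - xb)) in *.
  (* reflect: a gap below [-xb] for the sequence [-X] is a gap above [xb] for [X] *)
  destruct (sequence_gap_below (fun k => - X k) (- xb) e n ltac:(apply Rmin_pos; lra))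
    as [u [hu hfree]].
  { intros q hq hq1 hin. apply hnone. exists q. repeat (split; auto); lra. }
  apply (limit_not_at_gap_end xb (- u) xb); auto; try lra.
  intros k hk hin. apply (hfree k hk). lra.
Qed.

(** Suppose that, infinitely often,
    an iteration splits every interval having an endpoint within [rho] of a
    trial point [a].  Then trials cluster at [a], so more and more intervals
    have such an endpoint and must be split at once: the number of parallel
    trials per iteration cannot stay bounded. *)
Section ForcedSplitting.
Variables (a rho : R) (L0 : nat).
Hypotheses (hL0 : (1 <= L0)%nat) (ha : is_trial L0 a) (hrho : 0 < rho).

Definition splits_near (l : nat) (s : nat -> R) (p : nat) (t : nat -> nat) : Prop :=
  forall j, (2 <= j <= qs l)%nat ->
    Rabs (s j - a) <= rho \/ Rabs (s (j - 1)%nat - a) <= rho ->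
    exists k, (1 <= k <= p)%nat /\ t k = j.

Hypothesis Hsplit : forall L, exists l s p t,
  (L <= l)%nat /\ step_data l s p t /\ splits_near l s p t.

Lemma closer_trial l s p t y : (L0 <= l)%nat -> step_data l s p t -> splits_near l s p t ->
  is_trial l y -> y <> a -> exists w, is_trial (S l) w /\ ~ is_trial l w /\ w <> a /\
    Rabs (w - a) <= (1 - kappa r) * Rabs (y - a).
Proof.
  intros hl HW hsplit hy hya. pose proof (kappa_bounds r Hr) as hk.
  pose proof (step_grid l s p t HW) as Hg.
  assert (ha' : is_trial l a) by (apply (is_trial_mono L0 l); auto).
  destruct (proj1 (is_trial_grid l s p t HW a) ha') as [i [hi ei]].
  destruct (proj1 (is_trial_grid l s p t HW y) hy) as [i' [hi' ei']].
  (* split the interval [(s (j-1), s j)] adjacent to [a] on the side of [y] *)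
  assert (side : exists j, (2 <= j <= qs l)%nat /\
            ((s j = a /\ y <= s (j - 1)%nat) \/ (s (j - 1)%nat = a /\ s j <= y))).
  { destruct (Rlt_dec y a) as [cy|cy].
    - pose proof (grid_lt_inv _ _ Hg i' i hi' hi ltac:(lra)).
      exists i. split; [lia|]. left. split; auto. rewrite <- ei'. apply (grid_le _ _ Hg); lia.
    - assert (a < y) by (destruct (Req_dec y a); [contradiction | lra]).
      pose proof (grid_lt_inv _ _ Hg i i' hi hi' ltac:(lra)).
      exists (S i). replace (S i - 1)%nat with i by lia. split; [lia|]. right.
      split; auto. rewrite <- ei'. apply (grid_le _ _ Hg); lia. }
  destruct side as [j [hj hside]].
  destruct (hsplit j hj) as [k [hk1 <-]].
  { destruct hside as [[e _]|[e _]]; [left | right]; rewrite e, Rminus_diag, Rabs_R0; lra. }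
  destruct (new_trial l s p t HW k hk1) as [hin [hnin [hb1 hb2]]].
  pose proof (dx_pos _ _ Hg (t k) hj) as hdx. unfold dx in *.
  exists (X (qs l + k)%nat). split; [auto|]. split; [auto|].
  assert (0 < kappa r * (s (t k) - s (t k - 1)%nat)) by (apply Rmult_lt_0_compat; lra).
  destruct hside as [[e hy']|[e hy']]; rewrite e in *.
  - split; [lra|]. rewrite !Rabs_left by lra. nra.
  - split; [lra|]. rewrite !Rabs_right by lra. nra.
Qed.

Lemma trials_cluster_at K L : (1 <= L)%nat ->
  exists l, (L <= l)%nat /\ exists y, is_trial l y /\ y <> a /\ Rabs (y - a) <= (1 - kappa r) ^ K.
Proof.
  intro hL. pose proof (kappa_bounds r Hr).
  assert (ha01 : 0 <= a <= 1) by (destruct ha as [k0 [hk0 <-]]; apply trial_in01; lia).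
  induction K as [|K IH].
  - exists L. split; [lia|]. simpl. destruct (Req_dec a 0) as [e|e].
    + exists 1. split; [apply is_trial_1; auto|]. rewrite e, Rminus_0_r, Rabs_R1. split; lra.
    + exists 0. split; [apply is_trial_0; auto|].
      rewrite Rminus_0_l, Rabs_Ropp, Rabs_pos_eq by lra. split; lra.
  - destruct IH as [l [hl [y [hy [hya hyd]]]]].
    destruct (Hsplit (Nat.max l L0)) as [l' [s [p [t [hl' [HW hsplit]]]]]].
    destruct (closer_trial l' s p t y ltac:(lia) HW hsplit) as [w [hw [_ [hwa hwd]]]];
      [apply (is_trial_mono l l'); auto; lia | auto |].
    exists (S l'). split; [lia|]. exists w. split; [auto|]. split; [auto|].
    simpl. pose proof (Rabs_pos (y - a)). nra.
Qed.

Lemma new_trial_near L : (1 <= L)%nat ->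
  exists l, (L <= l)%nat /\ exists w, is_trial (S l) w /\ ~ is_trial l w /\ Rabs (w - a) <= rho.
Proof.
  intro hL. pose proof (kappa_bounds r Hr).
  destruct (pow_lt_1_zero (1 - kappa r) ltac:(rewrite Rabs_pos_eq; lra) rho hrho) as [K hK].
  specialize (hK K (Nat.le_refl K)). rewrite Rabs_pos_eq in hK by (apply pow_le; lra).
  destruct (trials_cluster_at K L hL) as [l [hl [y [hy [hya hyd]]]]].
  destruct (Hsplit (Nat.max l L0)) as [l' [s [p [t [hl' [HW hsplit]]]]]].
  destruct (closer_trial l' s p t y ltac:(lia) HW hsplit) as [w [hw1 [hw2 [_ hw3]]]];
    [apply (is_trial_mono l l'); auto; lia | auto |].
  exists l'. split; [lia|]. exists w. split; [auto|]. split; [auto|].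
  pose proof (Rabs_pos (y - a)). nra.
Qed.

Lemma many_trials_near M : exists L, (1 <= L)%nat /\ exists ys : list R,
  length ys = M /\ NoDup ys /\ forall y, In y ys -> is_trial L y /\ Rabs (y - a) <= rho.
Proof.
  induction M as [|M IH].
  - exists 1%nat. split; [lia|]. exists nil. split; [auto|]. split; [constructor | intros y []].
  - destruct IH as [L [hL [ys [hlen [hnd hall]]]]].
    destruct (new_trial_near L hL) as [l [hl [w [hw1 [hw2 hw3]]]]].
    exists (S l). split; [lia|]. exists (w :: ys). split; [simpl; auto|]. split.
    + constructor; auto. intro hin. apply hw2, (is_trial_mono L l); auto. apply hall; auto.
    + intros y [<-|hy]; [auto|]. destruct (hall y hy) as [h1 h2].
      split; [apply (is_trial_mono L (S l)); auto|]; auto.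
Qed.

(** Therefore some iteration makes more than [Q] trials, for any [Q]: at an
    iteration splitting everything near [a], each of [Q + 2] distinct grid points
    near [a], except possibly the first grid point, is the right end of a split
    interval. *)
Lemma forced_splitting_unbounded Q : exists l s p t,
  (1 <= l)%nat /\ step_data l s p t /\ (Q < p)%nat.
Proof.
  destruct (many_trials_near (Q + 2)) as [L [hL [ys [hlen [hnd hall]]]]].
  destruct (Hsplit (Nat.max L L0)) as [l [s [p [t [hl [HW hsplit]]]]]].
  exists l, s, p, t. split; [lia|]. split; [auto|].
  assert (hincl : incl ys (map s (1%nat :: map t (seq 1 p)))).
  { intros y hy. destruct (hall y hy) as [hyt hya].
    destruct (proj1 (is_trial_grid l s p t HW y) (is_trial_mono L l y hL ltac:(lia) hyt))
      as [i [hi <-]].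
    destruct (Nat.eq_dec i 1) as [->|ne]; [left; auto|].
    destruct (hsplit i ltac:(lia) (or_introl hya)) as [k [hk <-]].
    right. rewrite map_map. apply (in_map (fun k => s (t k))). apply in_seq. lia. }
  pose proof (NoDup_incl_length hnd hincl) as hcount.
  rewrite length_map in hcount. simpl in hcount. rewrite length_map, length_seq in hcount.
  lia.
Qed.

End ForcedSplitting.

(** If
    [f(a) < f(xb)] for a trial [a], every interval with an endpoint near [a] has
    characteristic above [-2 f(xb) + (f(xb) - f(a))], a level beaten by selected
    intervals infinitely often, so they are all split: impossible with [p <= Q]. *)
Lemma limit_value_below_trials xb Q : limit_point X xb ->
  (forall l, (2 <= l)%nat -> (qs l - qs (l - 1) <= Q)%nat) ->
  forall q, (1 <= q)%nat -> f xb <= f (X q).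
Proof.
  intros hlim HQ q0 hq0. apply Rnot_lt_le. intro hlt.
  set (a := X q0). set (c0 := f xb - f a). assert (hc0 : 0 < c0) by (unfold c0, a; lra).
  pose proof (trial_in01 q0 hq0) as ha01. fold a in ha01.
  set (z := c0 / (4 * H)). assert (hz : 0 < z) by (apply Rdiv_lt_0_compat; lra).
  assert (hHz : H * z = c0 / 4) by (unfold z; field; lra).
  assert (hrho : 0 < z ^ N) by (apply pow_lt; auto).
  destruct (forced_splitting_unbounded a (z ^ N) q0 hq0 (is_trial_index q0 q0 hq0 ltac:(lia))
              hrho) with (Q := Q) as [l [s [p [t [hl [HW hp]]]]]].
  - intro L.
    destruct (small_characteristic_selected xb (-2 * f xb + c0) (Nat.max L 1) hlim
                ltac:(lra) ltac:(lia)) as [l [s [p [t [k0 [hl [HW [hk0 hsmall]]]]]]]].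
    exists l, s, p, t. split; [lia|]. split; [auto|].
    intros j hj hnear. apply (must_be_selected l s p t HW k0 j hk0 hj).
    pose proof (charR_lower_near _ _ (step_grid l s p t HW) j a z hj ha01 hz hnear).
    pose proof (rt_pos _ _ (step_grid l s p t HW) j hj).
    assert (0 < r * xi * rt N s j) by (apply Rmult_lt_0_compat; [apply Rmult_lt_0_compat|]; lra).
    unfold c0 in *. lra.
  - destruct (step_size l s p t HW) as [_ e].
    pose proof (HQ (S l) ltac:(lia)) as hQ. replace (S l - 1)%nat with l in hQ by lia.
    lia.
Qed.

(** Claim (iii) follows from (iv) by continuity: a lower bound on all trial
    values is a lower bound on the value at any limit point. *)
Lemma limit_value_ge x c : limit_point X x -> (forall q, (1 <= q)%nat -> c <= f (X q)) ->
  c <= f x.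
Proof.
  intros hlim hc. apply Rnot_lt_le. intro hlt.
  set (z := (c - f x) / (2 * H)). assert (hz : 0 < z) by (apply Rdiv_lt_0_compat; lra).
  destruct (hlim (z ^ N) ltac:(apply pow_lt; auto) 1%nat) as [q [_ [hq h]]].
  pose proof (holder_close f H N (X q) x z HN HH Hhol (trial_in01 q hq)
                (limit_point_in01 x hlim) hz ltac:(lra)) as hh.
  apply Rabs_le_bounds in hh. pose proof (hc q hq).
  assert (H * z = (c - f x) / 2) by (unfold z; field; lra). lra.
Qed.

(** Claim (ii): with finitely many local extrema of [f], a limit point is a local
    minimizer, since by (i) and (iv) trial values [>= f(xb)] approach it from each side. *)
Lemma limit_is_local_min xb Q : limit_point X xb ->
  (forall l, (2 <= l)%nat -> (qs l - qs (l - 1) <= Q)%nat) ->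
  finitely_many_local_extrema f -> local_min_on01 f xb.
Proof.
  intros hlim HQ hfin. pose proof (limit_point_in01 xb hlim) as hxb.
  pose proof (limit_value_below_trials xb Q hlim HQ) as hbelow.
  apply local_min_from_samples; auto.
  - intros h1 d hd. destruct (trials_right_of_limit xb h1 hlim d 1 hd) as [q [_ [hq hx]]].
    pose proof (trial_in01 q hq). exists (X q). split; [lra | split; [lra | auto]].
  - intros h0 d hd. destruct (trials_left_of_limit xb h0 hlim d 1 hd) as [q [_ [hq hx]]].
    pose proof (trial_in01 q hq). exists (X q). split; [lra | split; [lra | auto]].
Qed.

End Run.
End PLT.

Lemma extract_subsequence (X : nat -> R) (xb : R) (P : R -> Prop) :
  (forall eps n, 0 < eps ->
     exists q, (n <= q)%nat /\ (1 <= q)%nat /\ P (X q) /\ Rabs (X q - xb) < eps) ->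
  exists phi : nat -> nat, (forall n, (1 <= phi n)%nat /\ (phi n < phi (S n))%nat) /\
    (forall n, P (X (phi n))) /\ Un_cv (fun n => X (phi n)) xb.
Proof.
  intros happrox.
  assert (next : forall m n : nat, {q : nat | (n <= q)%nat /\ (1 <= q)%nat /\ P (X q) /\
                                     Rabs (X q - xb) < / (INR m + 1)}).
  { intros m n. apply constructive_indefinite_description, happrox.
    apply Rinv_0_lt_compat. pose proof (pos_INR m); lra. }
  set (phi := fix g (k : nat) : nat :=
         match k with O => proj1_sig (next O 1%nat) | S k' => proj1_sig (next k (S (g k'))) end).
  assert (hphi : forall k, (1 <= phi k)%nat /\ P (X (phi k)) /\
                          Rabs (X (phi k) - xb) < / (INR k + 1)).
  { intros [|k].
    - change (phi 0%nat) with (proj1_sig (next 0%nat 1%nat)).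
      destruct (next 0%nat 1%nat) as [q hq]; simpl; tauto.
    - change (phi (S k)) with (proj1_sig (next (S k) (S (phi k)))).
      destruct (next (S k) (S (phi k))) as [q hq]; simpl; tauto. }
  assert (hinc : forall k, (phi k < phi (S k))%nat).
  { intro k. change (phi (S k)) with (proj1_sig (next (S k) (S (phi k)))).
    destruct (next (S k) (S (phi k))) as [q hq]; simpl; lia. }
  exists phi. split; [intro n; split; [apply hphi | apply hinc]|]. split; [intro n; apply hphi|].
  intros eps heps. destruct (INR_archimed eps 1 heps) as [M hM]. exists M.
  intros n hn. unfold R_dist.
  apply Rlt_le_trans with (/ (INR n + 1)); [apply hphi|].
  assert (hM1 : 0 < INR M + 1) by (pose proof (pos_INR M); lra).
  apply Rle_trans with (/ (INR M + 1)).
  - apply Rinv_le_contravar; auto. apply le_INR in hn. lra.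
  - apply Rmult_le_reg_l with (INR M + 1); auto. rewrite Rinv_r by lra. nra.
Qed.

Theorem theorem1 (f : R -> R) (N : nat) (r xi H : R) (X : nat -> R)
  (qs : nat -> nat) (Q : nat) (xb : R) :
  (1 <= N)%nat -> 1 < r -> 0 < xi -> 0 < H ->
  holder f H N ->
  PLT_run f N r xi X qs ->
  (forall l, (2 <= l)%nat -> (qs l - qs (l - 1) <= Q)%nat) ->
  0 <= xb <= 1 ->
  limit_point X xb ->
  (* (i) *)
  (0 < xb < 1 ->
     (exists phi : nat -> nat,
        (forall n, (1 <= phi n)%nat /\ (phi n < phi (S n))%nat) /\
        (forall n, X (phi n) < xb) /\ Un_cv (fun n => X (phi n)) xb) /\
     (exists phi : nat -> nat,
        (forall n, (1 <= phi n)%nat /\ (phi n < phi (S n))%nat) /\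
        (forall n, xb < X (phi n)) /\ Un_cv (fun n => X (phi n)) xb)) /\
  (* (ii) *)
  (finitely_many_local_extrema f -> local_min_on01 f xb) /\
  (* (iii) *)
  (forall xh, limit_point X xh -> f xb = f xh) /\
  (* (iv) *)
  (forall q, (1 <= q)%nat -> f xb <= f (X q)).
Proof.
  intros HN Hr Hxi HH Hhol Hrun HQ _ Hlim.
  pose proof (limit_value_below_trials f N r xi H HN Hr Hxi HH Hhol X qs Hrun) as Hiv.
  split; [|split; [|split]].
  -
    intros [h0 h1]. split.
    + apply (extract_subsequence X xb (fun y => y < xb)). intros eps n heps.
      destruct (trials_left_of_limit f N r xi H HN Hr Hxi HH Hhol X qs Hrun xb h0 Hlim eps n heps)
        as [q [hn [hq hx]]].
      exists q. split; [auto | split; [auto | split; [lra | apply Rabs_def1; lra]]].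
    + apply (extract_subsequence X xb (fun y => xb < y)). intros eps n heps.
      destruct (trials_right_of_limit f N r xi H HN Hr Hxi HH Hhol X qs Hrun xb h1 Hlim eps n heps)
        as [q [hn [hq hx]]].
      exists q. split; [auto | split; [auto | split; [lra | apply Rabs_def1; lra]]].
  - exact (limit_is_local_min f N r xi H HN Hr Hxi HH Hhol X qs Hrun xb Q Hlim HQ).
  - (* (iii): each limit value bounds all trial values from below, hence the other *)
    intros xh hxh. apply Rle_antisym; apply (limit_value_ge f N r xi H HN Hr Hxi HH Hhol X qs Hrun);
      auto; apply (Hiv _ Q); auto.
  - exact (Hiv xb Q Hlim HQ).
Qed.
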